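(* Let $h:Q\to P$ be an $\iota$-map of positive opetopes, $q_1,q_2\in Q-\ker(h)$, and $l<k$ natural numbers such that $\gamma^{(k+1)}(q_1)<^-\gamma^{(k+1)}(q_2)$, $\gamma^{(j)}(q_1)<^+\gamma^{(j)}(q_2)$ for all $j$ with $l<j\le k$, and $\gamma^{(l)}(q_1)=\gamma^{(l)}(q_2)$. Then there is $l'$ with $l\le l'<k$ such that $h(\gamma^{(k+1)}(q_1))<^-h(\gamma^{(k+1)}(q_2))$, $h(\gamma^{(j)}(q_1))<^+h(\gamma^{(j)}(q_2))$ for all $j$ with $l'<j\le k$, and $h(\gamma^{(l')}(q_1))=h(\gamma^{(l')}(q_2))$.
   Context: A positive hypergraph $S$ consists of finite sets $S_k$ ($k\in\mathbb{N}$), only finitely many nonempty, functions $\gamma:S_{k+1}\to S_k$, and for each $k$ an assignment $\delta$ sending each $a\in S_{k+1}$ to a nonempty subset $\delta(a)\subseteq S_k$, with $\delta(a)$ a singleton for $a\in S_1$. A face is identified with its singleton; $\gamma(X)=\{\gamma(a):a\in X\}$, $\delta(X)=\bigcup_{a\in X}\delta(a)$. For $k>0$ the lower order $<^-$ on $S_k$ is the transitive closure of: $a\lhd b$ iff $\gamma(a)\in\delta(b)$. The upper order $<^+$ on $S_k$ is the transitive closure of: $a\lhd b$ iff there is $\alpha\in S_{k+1}$ with $a\in\delta(\alpha)$, $\gamma(\alpha)=b$. $a\perp^{\pm}b$ iff $a<^{\pm}b$ or $b<^{\pm}a$. A positive opetopic cardinal: $S_0\ne\emptyset$; globularity ($\gamma\gamma(a)=\gamma\delta(a)-\delta\delta(a)$,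 $\delta\gamma(a)=\delta\delta(a)-\gamma\delta(a)$ for $\dim a\ge2$); each $<^+$ a strict order, linear on $S_0$; for $k>0$, $\perp^-\cap\perp^+=\emptyset$ on $S_k$; for $x\in S_{k-1}$, $\{a:\gamma(a)=x\}$ and $\{a:x\in\delta(a)\}$ linearly ordered by $<^+$. A positive opetope: additionally $|P_m-\delta(P_{m+1})|\le1$ for all $m$. $\gamma^{(k)}(p)=p$ if $\dim p\le k$, else $\gamma^{(k)}(p)=\gamma(\gamma^{(k+1)}(p))$. An $\iota$-map $h:Q\to P$ of positive opetopes is a function on faces with: $\dim h(q)\le\dim q$; $h(\gamma^{(k)}(q))=\gamma^{(k)}(h(q))$ for $k\ge0$, $q\in Q_{k+1}$; and, with $\ker(h)=\{q:\dim q>\dim h(q)\}$, for $q\in Q_{k+1}$: if $\dim h(q)=k+1$, $h$ restricts to a bijection $\delta(q)-\ker(h)\to\delta(h(q))$; if $\dim h(q)=k$, to a bijection $\delta(q)-\ker(h)\to\{h(q)\}$; if $\dim h(q)<k$, $\delta(q)\subseteq\ker(h)$. *)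

From mathcomp Require Import all_boot.
Set Implicit Arguments. Unset Strict Implicit. Unset Printing Implicit Defensive.

(* S_k = [set a | dim a == k]; gam/del are meaningful only on faces of
   positive dimension (their values on 0-dimensional faces are irrelevant). *)
Record hgraph := HGraph {
  face :> finType;
  dim : face -> nat;
  gam : face -> face;
  del : face -> {set face}
}.

Section Defs.
Variable S : hgraph.
Implicit Types a b x : S.

Definition is_pos_hypergraph : Prop :=
  forall a, 0 < dim a ->
    [/\ dim (gam a) = (dim a).-1,
        del a != set0,
        {in del a, forall b, dim b = (dim a).-1} &
        (dim a = 1 -> #|del a| = 1)].

Definition gamS (X : {set S}) : {set S} := (@gam S) @: X.
Definition delS (X : {set S}) : {set S} := \bigcup_(a in X) del a.

Definition lhd_minus : rel S := fun a b =>
  [&& dim a == dim b, 0 < dim a & gam a \in del b].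
Definition lhd_plus : rel S := fun a b =>
  (dim a == dim b) &&
  [exists al : S, [&& dim al == (dim a).+1, a \in del al & gam al == b]].

Definition lt_minus : rel S := fun a b =>
  [exists c, lhd_minus a c && connect lhd_minus c b].
Definition lt_plus : rel S := fun a b =>
  [exists c, lhd_plus a c && connect lhd_plus c b].

Definition perp_minus : rel S := fun a b => lt_minus a b || lt_minus b a.
Definition perp_plus : rel S := fun a b => lt_plus a b || lt_plus b a.

Definition is_globular : Prop :=
  forall a, 2 <= dim a ->
    [set gam (gam a)] = gamS (del a) :\: delS (del a) /\
    del (gam a) = delS (del a) :\: gamS (del a).

Definition is_cardinal_rest : Prop :=
  [/\
      (forall a b, dim a = 0 -> dim b = 0 -> a != b -> perp_plus a b),
      (forall a b, 0 < dim a -> dim a = dim b ->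
         ~~ (perp_minus a b && perp_plus a b)) &
      (forall x a b, dim a = (dim x).+1 -> dim b = (dim x).+1 -> a != b ->
         (gam a = x -> gam b = x -> perp_plus a b) /\
         (x \in del a -> x \in del b -> perp_plus a b))].

Definition is_pos_opetopic_cardinal : Prop :=
  [/\ is_pos_hypergraph,
      (exists a, dim a = 0),
      is_globular,
      (forall a, ~~ lt_plus a a) &
      is_cardinal_rest].

Definition is_pos_opetope : Prop :=
  is_pos_opetopic_cardinal /\
  forall m : nat,
    #|[set a | dim a == m] :\: delS [set b | dim b == m.+1]| <= 1.

(* gamma^(k)(p): p if dim p <= k, else gamma(gamma^(k+1)(p)) *)
Definition gk (k : nat) (p : S) : S := iter (dim p - k) (@gam S) p.

End Defs.

Definition bij_onto (Q P : finType) (h : Q -> P) (A : {set Q}) (B : {set P}) :=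
  {in A &, injective h} /\ h @: A = B.

Definition ker (Q P : hgraph) (h : Q -> P) : {set Q} :=
  [set q | dim (h q) < dim q].

Definition is_iota_map (Q P : hgraph) (h : Q -> P) : Prop :=
  [/\ forall q, dim (h q) <= dim q,
      forall (k : nat) (q : Q), dim q = k.+1 -> h (gk k q) = gk k (h q) &
      forall (k : nat) (q : Q), dim q = k.+1 ->
        [/\ dim (h q) = k.+1 -> bij_onto h (del q :\: ker h) (del (h q)),
            dim (h q) = k -> bij_onto h (del q :\: ker h) [set h q] &
            dim (h q) < k -> del q \subset ker h]].

From mathcomp Require Import all_boot zify.
Set Implicit Arguments. Unset Strict Implicit. Unset Printing Implicit Defensive.

(* An iota-map h sends a face outside its kernel to a face of the same
   dimension, and then commutes with the iterated targets gamma^(j).  Along a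
   chain a <| c_1 <| ... <| b of (k+1)-faces witnessing a <^- b, the faces
   that h collapses to k-faces can simply be skipped, so h preserves <^-
   between faces outside the kernel; similarly h turns <^+ into "<^+ or =".
   The images of gamma^(k)(q_1) and gamma^(k)(q_2) differ, being the targets
   of <^- related faces of P, so l' can be taken to be the last j in [l, k]
   with h(gamma^(j)(q_1)) = h(gamma^(j)(q_2)). *)

Section TransitiveClosure.
Variables (T : finType) (e : rel T).

Definition tconnect : rel T := fun x y => [exists z, e x z && connect e z y].

Lemma tconnect_connect x y : tconnect x y -> connect e x y.
Proof. by case/existsP=> z /andP[/connect1 e_xz]; apply: connect_trans. Qed.

Lemma connect_eq_or_tconnect x y : connect e x y -> x = y \/ tconnect x y.
Proof.
case/connectP=> [[|z p]] /= e_p ->; [by left | right].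
case/andP: e_p => e_xz e_p; apply/existsP; exists z.
by rewrite e_xz; apply/connectP; exists p.
Qed.

End TransitiveClosure.

Lemma connect_homo_in (T U : finType) (e : rel T) (e' : rel U) (f : T -> U)
    (a : pred T) :
  (forall x y, a x -> e x y -> a y /\ (f x = f y \/ e' (f x) (f y))) ->
  forall x y, a x -> connect e x y -> connect e' (f x) (f y).
Proof.
move=> homo_f x _ ax /connectP[p e_p ->].
elim: p x ax e_p => [|z p IHp] x ax /=; first by rewrite connect0.
case/andP=> e_xz e_p; have [az [->|e'_fxz]] := homo_f _ _ ax e_xz.
  exact: IHp.
exact: connect_trans (connect1 e'_fxz) (IHp _ az e_p).
Qed.

Lemma last_index_before (E : pred nat) (R : nat -> Prop) l k :
  l <= k -> E l -> ~~ E k -> (forall j, l < j <= k -> R j \/ E j) ->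
  exists l', [/\ l <= l' < k, E l' & forall j, l' < j <= k -> R j].
Proof.
move=> le_lk El nEk RE.
pose F j := (l <= j <= k) && E j.
have exF : exists j, F j by exists l; rewrite /F leqnn le_lk.
have ubF j : F j -> j <= k by case/andP=> /andP[].
case: (ex_maxnP exF ubF) => l' /andP[/andP[le_ll' le_l'k] El'] maxF.
exists l'; split=> //.
  by rewrite le_ll' ltn_neqAle le_l'k andbT; apply: contraNneq nEk => <-.
move=> j /andP[lt_l'j le_jk].
have lt_lj : l < j by apply: leq_trans lt_l'j.
case: (RE j _) => [|//|Ej]; first by rewrite lt_lj.
by have := maxF j; rewrite /F ltnW // le_jk Ej leqNgt lt_l'j => /(_ isT).
Qed.

Section PositiveHypergraph.
Variables (S : hgraph) (HS : is_pos_hypergraph S).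
Implicit Types (a b x : S).

Lemma dim_gam a : 0 < dim a -> dim (gam a) = (dim a).-1.
Proof. by case/HS. Qed.

Lemma dim_del a b : 0 < dim a -> b \in del a -> dim b = (dim a).-1.
Proof. by case/HS=> _ _ dim_del _ /dim_del. Qed.

Lemma dim_iter_gam n x : n <= dim x -> dim (iter n (@gam S) x) = dim x - n.
Proof.
elim: n => [|n IHn] le_nx /=; first by rewrite subn0.
by rewrite dim_gam IHn ?(ltnW le_nx) //; lia.
Qed.

Lemma dim_gk j x : j <= dim x -> dim (gk j x) = j.
Proof. by move=> le_jx; rewrite /gk dim_iter_gam ?leq_subr //; lia. Qed.

Lemma gk_id j x : dim x <= j -> gk j x = x.
Proof. by rewrite /gk -subn_eq0 => /eqP->. Qed.

Lemma dim_gk_le j x : dim (gk j x) <= j.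
Proof.
by case: (leqP j (dim x)) => [/dim_gk->|/ltnW le_xj]; rewrite ?gk_id.
Qed.

Lemma gk_gk i j x : j <= i -> gk j (gk i x) = gk j x.
Proof.
move=> le_ji; case: (leqP (dim x) i) => [le_xi | lt_ix].
  by rewrite (gk_id le_xi).
rewrite {1}/gk dim_gk ?(ltnW lt_ix) // /gk -iterD; congr iter; lia.
Qed.

Lemma gk_pred a : 0 < dim a -> gk (dim a).-1 a = gam a.
Proof. by move=> a_gt0; rewrite /gk (_ : dim a - (dim a).-1 = 1) //; lia. Qed.

Lemma lhd_minus_gam a b : lhd_minus a b -> lhd_plus (gam a) (gam b).
Proof.
case/and3P=> /eqP dim_ab a_gt0 gam_a.
rewrite /lhd_plus !dim_gam -?dim_ab // eqxx /=.
by apply/existsP; exists b; rewrite gam_a eqxx dim_ab; lia.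
Qed.

Lemma lt_minus_gam a b : lt_minus a b -> lt_plus (gam a) (gam b).
Proof.
case/existsP=> c /andP[/lhd_minus_gam lhd_ac conn_cb].
apply/existsP; exists (gam c); rewrite lhd_ac.
apply: (connect_homo_in (a := predT)) conn_cb => // x y _ /lhd_minus_gam lhd_xy.
by split=> //; right.
Qed.

Lemma lt_minus_dim a b : lt_minus a b -> dim a = dim b /\ 0 < dim a.
Proof.
case/existsP=> c /andP[/and3P[/eqP dim_ac a_gt0 _] conn_cb]; split=> //.
have dim_closed : closed (@lhd_minus S) [pred y | dim y == dim c].
  by move=> y z /and3P[/eqP dim_yz _ _]; rewrite !inE dim_yz.
have := closed_connect dim_closed conn_cb.
by rewrite !inE eqxx dim_ac => /esym/eqP.
Qed.

Hypothesis lt_plus_irr : forall a, ~~ lt_plus a a.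

Lemma lt_minus_irr a : ~~ lt_minus a a.
Proof. exact: contra (@lt_minus_gam a a) (lt_plus_irr (gam a)). Qed.

Lemma lt_minus_gk_neq k x y :
  lt_minus (gk k.+1 x) (gk k.+1 y) -> gk k x != gk k y.
Proof.
rewrite -(gk_gk x (leqnSn k)) -(gk_gk y (leqnSn k)).
move: (gk k.+1 x) (gk k.+1 y) (dim_gk_le k.+1 x) => a b le_a lt_ab.
have [dim_ab a_gt0] := lt_minus_dim lt_ab.
case: (ltngtP (dim a) k.+1) le_a => // [lt_ak | dim_a] _.
  rewrite !gk_id -?dim_ab //.
  by apply: contraTneq lt_ab => ->; apply: lt_minus_irr.
have [-> ->] : gk k a = gam a /\ gk k b = gam b.
  by rewrite -[k]/(k.+1.-1) -dim_a {2}dim_ab !gk_pred // -dim_ab.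
by apply: contraTneq (lt_minus_gam lt_ab) => ->; apply: lt_plus_irr.
Qed.

End PositiveHypergraph.

Section IotaMap.
Variables (Q P : hgraph) (h : Q -> P).
Hypotheses (HQ : is_pos_hypergraph Q) (HP : is_pos_hypergraph P).
Hypothesis (Hh : is_iota_map h).
Implicit Types (c e q : Q).

Lemma notin_kerE q : (q \notin ker h) = (dim (h q) == dim q).
Proof. by case: Hh => dim_h _ _; rewrite inE -leqNgt eqn_leq dim_h. Qed.

Lemma dim_notin_ker q : q \notin ker h -> dim (h q) = dim q.
Proof. by rewrite notin_kerE => /eqP. Qed.

Lemma dim_ker_gt0 q : q \in ker h -> 0 < dim q.
Proof. by rewrite inE => /(leq_ltn_trans (leq0n _)). Qed.

Lemma iota_gam q : 0 < dim q -> h (gam q) = gk (dim q).-1 (h q).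
Proof.
move=> q_gt0; case: Hh => _ h_gk _.
by rewrite -(gk_pred q_gt0) h_gk // prednK.
Qed.

Lemma iota_gam_notin_ker q :
  0 < dim q -> q \notin ker h -> h (gam q) = gam (h q).
Proof.
move=> q_gt0 /dim_notin_ker dim_hq.
by rewrite iota_gam // -dim_hq gk_pred // dim_hq.
Qed.

Lemma iota_gam_in_ker q : q \in ker h -> h (gam q) = h q.
Proof.
move=> q_ker; have q_gt0 := dim_ker_gt0 q_ker.
by rewrite iota_gam // gk_id // -ltnS prednK //; rewrite inE in q_ker.
Qed.

Lemma gam_notin_ker q : 0 < dim q -> q \notin ker h -> gam q \notin ker h.
Proof.
move=> q_gt0 q_nker; rewrite notin_kerE iota_gam_notin_ker //.
by rewrite !dim_gam ?dim_notin_ker.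
Qed.

Lemma iota_del_notin_ker c e : 0 < dim c -> c \notin ker h ->
  e \in del c -> e \notin ker h -> h e \in del (h c).
Proof.
move=> c_gt0 c_nker e_c e_nker; case: Hh => _ _ h_del.
have [+ _ _] := h_del _ c (esym (prednK c_gt0)).
case=> [|_ <-]; first by rewrite prednK ?dim_notin_ker.
by apply: imset_f; rewrite inE e_nker.
Qed.

Lemma iota_del_in_ker c e : c \in ker h ->
  e \in del c -> e \notin ker h -> h e = h c.
Proof.
move=> c_ker e_c e_nker; have c_gt0 := dim_ker_gt0 c_ker.
case: Hh => _ _ h_del.
have [_ + del_ker] := h_del _ c (esym (prednK c_gt0)).
have dim_hc : dim (h c) = (dim c).-1.
  move: c_ker; rewrite inE -{1}(prednK c_gt0) ltnS leq_eqVlt => /orP[/eqP //|].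
  by move/del_ker/subsetP/(_ e e_c); rewrite (negbTE e_nker).
by case/(_ dim_hc)=> _ img; apply/set1P; rewrite -img imset_f // inE e_nker.
Qed.

Lemma iter_gam_notin_ker n q : n <= dim q -> q \notin ker h ->
  iter n (@gam Q) q \notin ker h.
Proof.
elim: n => [//|n IHn] le_nq q_nker /=.
by rewrite gam_notin_ker ?IHn ?dim_iter_gam ?subn_gt0 // ltnW.
Qed.

Lemma iota_iter_gam n q : n <= dim q -> q \notin ker h ->
  h (iter n (@gam Q) q) = iter n (@gam P) (h q).
Proof.
elim: n => [//|n IHn] le_nq q_nker /=.
have le_nq' := ltnW le_nq.
by rewrite iota_gam_notin_ker ?IHn ?iter_gam_notin_ker ?dim_iter_gam ?subn_gt0.
Qed.

Lemma gk_notin_ker j q : q \notin ker h -> gk j q \notin ker h.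
Proof. exact/iter_gam_notin_ker/leq_subr. Qed.

Lemma iota_gk j q : q \notin ker h -> h (gk j q) = gk j (h q).
Proof.
by move=> q_nker; rewrite /gk iota_iter_gam ?leq_subr ?dim_notin_ker.
Qed.

(* x is the last face of the image chain built so far and h e its target;
   a collapsed face c is skipped, since h e = h c = h (gam c). *)
Lemma lt_minus_map_from_del c c' e (x : P) :
  0 < dim c -> e \in del c -> e \notin ker h -> dim x = dim c -> gam x = h e ->
  connect (@lhd_minus Q) c c' -> c' \notin ker h -> lt_minus x (h c').
Proof.
move=> + + + + + /connectP[p lhd_p ->].
elim: p c e x lhd_p => [|c1 p IHp] c e x /= + c_gt0 e_c e_nker dim_x gam_x.
  move=> _ c_nker; apply/existsP; exists (h c); rewrite connect0 andbT.
  rewrite /lhd_minus dim_x dim_notin_ker // eqxx c_gt0 gam_x.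
  exact: iota_del_notin_ker.
case/andP=> /and3P[/eqP dim_cc1 _ gam_c] lhd_p p_nker.
have gam_c_nker : gam c \notin ker h.
  have [c_ker | /(gam_notin_ker c_gt0)//] := boolP (c \in ker h).
  by rewrite notin_kerE iota_gam_in_ker // -(iota_del_in_ker c_ker e_c e_nker)
    dim_notin_ker // (dim_del HQ c_gt0 e_c) dim_gam.
have [c_ker | c_nker] := boolP (c \in ker h).
  apply: (IHp c1 (gam c) x) => //; rewrite -?dim_cc1 //.
  by rewrite iota_gam_in_ker // -(iota_del_in_ker c_ker e_c e_nker).
apply/existsP; exists (h c).
rewrite /lhd_minus dim_x dim_notin_ker // eqxx c_gt0 gam_x.
rewrite iota_del_notin_ker //=.
apply/tconnect_connect/(IHp c1 (gam c)); rewrite -?dim_cc1 ?dim_notin_ker //.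
by rewrite iota_gam_notin_ker.
Qed.

Lemma lt_minus_map a b : a \notin ker h -> b \notin ker h ->
  lt_minus a b -> lt_minus (h a) (h b).
Proof.
move=> a_nker b_nker lt_ab; have [_ a_gt0] := lt_minus_dim lt_ab.
case/existsP: lt_ab => c /andP[/and3P[/eqP dim_ac _ gam_a] conn_cb].
apply: (lt_minus_map_from_del _ gam_a) conn_cb b_nker; rewrite -?dim_ac //.
- exact: gam_notin_ker.
- exact: dim_notin_ker.
- exact/esym/iota_gam_notin_ker.
Qed.

Lemma connect_lhd_plus_map a b : a \notin ker h ->
  connect (@lhd_plus Q) a b -> connect (@lhd_plus P) (h a) (h b).
Proof.
apply: (connect_homo_in (a := [pred q | q \notin ker h])) => u v /= u_nker.
case/andP=> /eqP dim_uv /existsP[al /and3P[/eqP dim_al u_al /eqP gam_al]].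
have al_gt0 : 0 < dim al by rewrite dim_al.
have [al_ker | al_nker] := boolP (al \in ker h).
  have h_uv : h u = h v.
    by rewrite -gam_al iota_gam_in_ker ?(iota_del_in_ker al_ker).
  by rewrite notin_kerE -h_uv dim_notin_ker // dim_uv; auto.
have dim_hal : dim (h al) = (dim u).+1 by rewrite dim_notin_ker.
rewrite -gam_al gam_notin_ker //; split=> //; right.
rewrite /lhd_plus iota_gam_notin_ker // dim_gam ?dim_hal //.
rewrite dim_notin_ker // eqxx.
apply/existsP; exists (h al).
by rewrite dim_hal !eqxx iota_del_notin_ker.
Qed.

End IotaMap.

Unset Implicit Arguments. Set Strict Implicit. Set Printing Implicit Defensive.

Theorem mainTheorem3 (Q P : hgraph) (h : Q -> P) (q1 q2 : Q) (l k : nat) :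
  is_pos_opetope Q -> is_pos_opetope P -> is_iota_map h ->
  q1 \notin ker h -> q2 \notin ker h -> l < k ->
  lt_minus (gk k.+1 q1) (gk k.+1 q2) ->
  (forall j : nat, l < j <= k -> lt_plus (gk j q1) (gk j q2)) ->
  gk l q1 = gk l q2 ->
  exists l' : nat,
    [/\ l <= l' < k,
        lt_minus (h (gk k.+1 q1)) (h (gk k.+1 q2)),
        (forall j : nat, l' < j <= k -> lt_plus (h (gk j q1)) (h (gk j q2))) &
        h (gk l' q1) = h (gk l' q2)].
Proof.
move=> [[HQ _ _ _ _] _] [[HP _ _ lt_plus_irr _] _] Hh q1_nker q2_nker lt_lk.
move=> lt_minus_k lt_plus_j eq_l.
have gk_nker := gk_notin_ker HQ HP Hh; have h_gk := iota_gk HQ HP Hh.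
have lt_minus_hk :=
  lt_minus_map HQ HP Hh (gk_nker _ _ q1_nker) (gk_nker _ _ q2_nker) lt_minus_k.
have neq_hk : h (gk k q1) != h (gk k q2).
  by rewrite !h_gk //; apply: (lt_minus_gk_neq HP lt_plus_irr); rewrite -!h_gk.
have lt_or_eq j : l < j <= k ->
    lt_plus (h (gk j q1)) (h (gk j q2)) \/ h (gk j q1) == h (gk j q2).
  move/lt_plus_j/tconnect_connect.
  move/(connect_lhd_plus_map HQ HP Hh (gk_nker j _ q1_nker)).
  by case/connect_eq_or_tconnect=> [->|]; [right | left].
have [l' [le_ll'k /eqP eq_l' lt_l'k]] :=
  last_index_before (ltnW lt_lk) (introT eqP (congr1 h eq_l)) neq_hk lt_or_eq.
by exists l'.
Qed.
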